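(* Let $H_A$ and $H_B$ be finite-dimensional Hilbert spaces with $n=\dim H_A$, and let $|\phi\rangle,|\psi\rangle\in H_A\otimes H_B$ be unit vectors such that $\langle\phi|\psi\rangle$ is a real positive number. Let $s,t>0$ with $s+t=1$, $s\le t$ and $\sqrt{s/t}\ge\langle\phi|\psi\rangle$. Then there exist an orthonormal basis $\{|i\rangle\}_{i=1}^n$ of $H_A$, nonnegative reals $s_i,t_i$ and unit vectors $|\eta_i\rangle,|\gamma_i\rangle\in H_B$ ($i=1,\dots,n$) such that $$|\phi\rangle=\sum_{i=1}^n\sqrt{s_i}\,|i\rangle|\eta_i\rangle,\qquad |\psi\rangle=\sum_{i=1}^n\sqrt{t_i}\,|i\rangle|\gamma_i\rangle,$$ and for every $i=1,\dots,n$: $\langle\eta_i|\gamma_i\rangle$ is real, $s\,s_i\le t\,t_i$, and $\sqrt{s\,s_i}\ge\sqrt{t\,t_i}\,\langle\eta_i|\gamma_i\rangle$ (i.e. $\sqrt{s s_i/(t t_i)}\ge\langle\eta_i|\gamma_i\rangle$ whenever $t_i>0$).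
   Context: Here $s$ and $t$ are the prior probabilities with which the states $|\phi\rangle$ and $|\psi\rangle$ are prepared. The paper adopts, throughout, the normalization (obtained by multiplying $|\psi\rangle$ by a global phase) that $\langle\phi|\psi\rangle>0$, and the lemma is proved under the standing case assumption $\sqrt{s/t}\ge\langle\phi|\psi\rangle$. *)

(* Complex scalars: an arbitrary numClosedFieldType C
   (e.g. the complex numbers); H_A = C^n, H_B = C^m (row vectors),
   H_A (x) H_B = n x m matrices, with the standard inner products. *)
From HB Require Import structures.
From mathcomp Require Import all_boot all_order all_algebra.
Set Implicit Arguments. Unset Strict Implicit. Unset Printing Implicit Defensive.
Import Order.TTheory GRing.Theory Num.Theory.
Local Open Scope ring_scope.

Definition ip (C : numClosedFieldType) (p q : nat) (A B : 'M[C]_(p, q)) : C :=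
  \sum_(i < p) \sum_(j < q) (A i j)^* * B i j.

Definition tens (C : numClosedFieldType) (n m : nat) (u : 'rV[C]_n) (v : 'rV[C]_m)
  : 'M[C]_(n, m) := \matrix_(i < n, j < m) (u 0 i * v 0 j).

From mathcomp Require Import all_boot all_order all_algebra.
From mathcomp Require Import ring.

(* Put D := sqrt t psi - sqrt s phi and Y := sqrt s phi - k D, where
   k := <D, sqrt s phi> / <D, D> makes <D, Y>, the trace of Y D^*, vanish.
   A traceless matrix G is unitarily similar to a zero-diagonal one: its
   numerical range is convex (which reduces to the 2 x 2 case), so it contains
   the mean tr G / n = 0 of the diagonal; a unit vector v with v G v^* = 0,
   completed to a unitary basis by a Householder reflection, lets one recurse
   on the orthogonal complement.  In a basis making Y D^* zero-diagonal the
   components d_i and y_i of D and Y are orthogonal.  The hypotheses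
   <phi|psi> <= sqrt (s / t) and s <= t give -1/2 <= k <= 0, and then
   <d_i, y_i> = 0 yields the three relations between the components a_i, b_i
   of phi and psi; normalising a_i and b_i gives s_i, t_i, eta_i, gamma_i. *)

Set Implicit Arguments.
Unset Strict Implicit.
Unset Printing Implicit Defensive.

Import Order.TTheory GRing.Theory Num.Theory Num.Def.
Local Open Scope ring_scope.
Local Open Scope sesquilinear_scope.

Section InnerProduct.
Variable C : numClosedFieldType.

Lemma ipDl p q (A B X : 'M[C]_(p, q)) : ip (A + B) X = ip A X + ip B X.
Proof.
rewrite /ip -big_split; apply: eq_bigr => i _; rewrite -big_split.
by apply: eq_bigr => j _; rewrite mxE rmorphD mulrDl.
Qed.

Lemma ipDr p q (X A B : 'M[C]_(p, q)) : ip X (A + B) = ip X A + ip X B.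
Proof.
rewrite /ip -big_split; apply: eq_bigr => i _; rewrite -big_split.
by apply: eq_bigr => j _; rewrite mxE mulrDr.
Qed.

Lemma ipZl p q a (A X : 'M[C]_(p, q)) : ip (a *: A) X = a^* * ip A X.
Proof.
rewrite /ip mulr_sumr; apply: eq_bigr => i _; rewrite mulr_sumr.
by apply: eq_bigr => j _; rewrite mxE rmorphM mulrA.
Qed.

Lemma ipZr p q a (X A : 'M[C]_(p, q)) : ip X (a *: A) = a * ip X A.
Proof.
rewrite /ip mulr_sumr; apply: eq_bigr => i _; rewrite mulr_sumr.
by apply: eq_bigr => j _; rewrite mxE mulrCA.
Qed.

Lemma ipNl p q (A X : 'M[C]_(p, q)) : ip (- A) X = - ip A X.
Proof. by rewrite -scaleN1r ipZl rmorphN1 mulN1r. Qed.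

Lemma ipNr p q (X A : 'M[C]_(p, q)) : ip X (- A) = - ip X A.
Proof. by rewrite -scaleN1r ipZr mulN1r. Qed.

Lemma ip0l p q (A : 'M[C]_(p, q)) : ip 0 A = 0.
Proof.
by rewrite /ip big1 // => i _; rewrite big1 // => j _; rewrite mxE rmorph0 mul0r.
Qed.

Lemma ipC p q (A B : 'M[C]_(p, q)) : ip B A = (ip A B)^*.
Proof.
rewrite /ip rmorph_sum; apply: eq_bigr => i _; rewrite rmorph_sum.
by apply: eq_bigr => j _; rewrite rmorphM /= conjCK mulrC.
Qed.

Lemma ip_ge0 p q (A : 'M[C]_(p, q)) : 0 <= ip A A.
Proof.
by apply: sumr_ge0 => i _; apply: sumr_ge0 => j _; rewrite mulrC mul_conjC_ge0.
Qed.

Lemma ip_real p q (A : 'M[C]_(p, q)) : ip A A \is Num.real.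
Proof. exact/ger0_real/ip_ge0. Qed.

Lemma ip_eq0 p q (A : 'M[C]_(p, q)) : (ip A A == 0) = (A == 0).
Proof.
apply/idP/eqP => [|->]; last by rewrite ip0l.
have ge0 i j : 0 <= (A i j)^* * A i j by rewrite mulrC mul_conjC_ge0.
rewrite psumr_eq0 => [/allP A0|i _]; last exact: sumr_ge0.
apply/matrixP => i j; have /= := A0 i (mem_index_enum _).
rewrite psumr_eq0 // => /allP /(_ j (mem_index_enum _)) /=.
by rewrite mulrC mul_conjC_eq0 mxE => /eqP.
Qed.

Lemma ip_row m n p (X : 'M[C]_(m, p)) (Z : 'M[C]_(n, p)) i j :
  ip (row i X) (row j Z) = (Z *m X^t*) j i.
Proof. by rewrite /ip big_ord1 mxE; apply: eq_bigr => k _; rewrite !mxE mulrC. Qed.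

Lemma mxtrace_mul_tC p q (A B : 'M[C]_(p, q)) : \tr (B *m A^t*) = ip A B.
Proof.
by apply: eq_bigr => i _; rewrite mxE; apply: eq_bigr => j _; rewrite !mxE mulrC.
Qed.

Lemma ip_sub_proj p q (D U : 'M[C]_(p, q)) :
  ip D (U - (ip D U / ip D D) *: D) = 0.
Proof.
have [->|D_neq0] := eqVneq D 0; first exact: ip0l.
by rewrite ipDr ipNr ipZr divfK ?subrr ?ip_eq0.
Qed.

Definition normalize p q (u x : 'M[C]_(p, q)) :=
  if ip x x == 0 then u else (sqrtC (ip x x))^-1 *: x.

Lemma ip_normalize p q (u x : 'M[C]_(p, q)) :
  ip u u = 1 -> ip (normalize u x) (normalize u x) = 1.
Proof.
rewrite /normalize; case: eqP => // /eqP x_neq0 _.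
have inv_conj : ((sqrtC (ip x x))^-1)^* = (sqrtC (ip x x))^-1.
  by rewrite geC0_conj // invr_ge0 sqrtC_ge0 ip_ge0.
by rewrite ipZl ipZr inv_conj mulrA -invfM -expr2 sqrtCK mulVf.
Qed.

Lemma normalizeK p q (u x : 'M[C]_(p, q)) : sqrtC (ip x x) *: normalize u x = x.
Proof.
rewrite /normalize; case: eqP => [x0|/eqP x_neq0].
  by rewrite x0 sqrtC0 scale0r; move/eqP: x0; rewrite ip_eq0 => /eqP.
by rewrite scalerA mulfV ?scale1r // sqrtC_eq0.
Qed.

End InnerProduct.

(** * Unitary matrices *)

Section Unitary.
Variable C : numClosedFieldType.

Lemma trmxC_mul m n p (A : 'M[C]_(m, n)) (B : 'M[C]_(n, p)) :
  (A *m B)^t* = B^t* *m A^t*.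
Proof. by rewrite trmx_mul map_mxM. Qed.

Lemma trmxCZ m n a (A : 'M[C]_(m, n)) : (a *: A)^t* = a^* *: A^t*.
Proof. by rewrite linearZ /= map_mxZ. Qed.

Lemma trmxC_scalar n (a : C) : (a%:M : 'M_n)^t* = (a^*)%:M.
Proof. by rewrite tr_scalar_mx map_scalar_mx. Qed.

Lemma mulmx_tC_rV n (w : 'rV[C]_n) : w *m w^t* = (ip w w)%:M.
Proof. by rewrite [LHS]mx11_scalar -ip_row !row_id. Qed.

Lemma unitarymx_rV n (v : 'rV[C]_n) : (v \is unitarymx) = (ip v v == 1).
Proof.
rewrite qualifE mulmx_tC_rV; apply/eqP/eqP => [/matrixP/(_ 0 0)|->] //.
by rewrite !mxE eqxx !mulr1n.
Qed.

Lemma ip_e0 n (v : 'rV[C]_n.+1) : ip 'e_0 v = v 0 0.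
Proof. by rewrite -row1 -[v](row_id 0) ip_row trmx1 map_mx1 mulmx1 row_id. Qed.

Lemma exists_unit_rV p m (A : 'M[C]_(p, m)) :
  ip A A = 1 -> exists u : 'rV[C]_m, ip u u = 1.
Proof.
case: m A => [|m] A; last by exists 'e_0; rewrite ip_e0 mxE eqxx.
by rewrite /ip big1 => [/esym/eqP|i _]; rewrite ?oner_eq0 ?big_ord0.
Qed.

Lemma unitarymx1 n : (1%:M : 'M[C]_n) \is unitarymx.
Proof. by apply/unitarymxP; rewrite trmx1 map_mx1 mulmx1. Qed.

Lemma conj_block_diag m n (P : 'M[C]_m) (Q : 'M[C]_n) Aul Aur Adl Adr :
  block_mx P 0 0 Q *m block_mx Aul Aur Adl Adr *m (block_mx P 0 0 Q)^t*
  = block_mx (P *m Aul *m P^t*) (P *m Aur *m Q^t*)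
             (Q *m Adl *m P^t*) (Q *m Adr *m Q^t*).
Proof.
rewrite tr_block_mx map_block_mx !mulmx_block.
by rewrite !(trmx0, map_mx0, mulmx0, mul0mx, addr0, add0r).
Qed.

Lemma unitarymx_block_diag m n (P : 'M[C]_m) (Q : 'M[C]_n) :
  P \is unitarymx -> Q \is unitarymx -> block_mx P 0 0 Q \is unitarymx.
Proof.
move=> /unitarymxP P_unit /unitarymxP Q_unit; apply/unitarymxP.
rewrite -[X in X *m _]mulmx1 (scalar_mx_block m n) conj_block_diag.
by rewrite !mulmx1 P_unit Q_unit !mulmx0 !mul0mx -scalar_mx_block.
Qed.

Lemma householder_unitary n (w : 'rV[C]_n) :
  w != 0 -> 1%:M - (2 / ip w w) *: (w^t* *m w) \is unitarymx.
Proof.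
rewrite -ip_eq0 => w_neq0; set N := ip w w; set P := w^t* *m w.
have c_conj : (2 / N)^* = 2 / N by rewrite conj_Creal // rpred_div ?rpred_nat ?ip_real.
have P_herm : P^t* = P by rewrite trmxC_mul trmxCK.
have PP : P *m P = N *: P.
  by rewrite mulmxA -[w^t* *m w *m _]mulmxA mulmx_tC_rV mul_mx_scalar scalemxAl.
have cN : 2 / N * (2 / N) * N = 2 / N + 2 / N by field.
apply/unitarymxP; rewrite linearB /= map_mxB trmx1 map_mx1 trmxCZ c_conj P_herm.
rewrite mulmxBl !mulmxBr !mul1mx !mulmx1 -!scalemxAl -!scalemxAr PP !scalerA cN.
by rewrite scalerDl opprB addrK subrK.
Qed.

Lemma unitary_completion n (v : 'rV[C]_n.+1) : v \is unitarymx ->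
  exists2 V : 'M[C]_n.+1, V \is unitarymx &
    exists2 mu, mu * mu^* = 1 & row 0 V = mu *: v.
Proof.
rewrite unitarymx_rV => /eqP v_unit; set x := v 0 0.
pose mu := if x == 0 then 1 else `|x| / x.
have mux : mu * x = `|x|.
  by rewrite /mu; case: eqP => [->|/eqP x_neq0]; rewrite ?normr0 ?mulr0 ?divfK.
have mu_unit : mu * mu^* = 1.
  rewrite /mu; case: eqP => [_|/eqP x_neq0]; first by rewrite rmorph1 mulr1.
  rewrite rmorphM fmorphV /= conj_normC mulrACA -invfM -normCK -expr2 mulfV //.
  by rewrite expf_neq0 // normr_eq0.
(* The reflection along [w] exchanges [e_0] and [- mu v], because [mu v] has a
   nonnegative first coordinate. *)
pose w := 'e_0 + mu *: v.
have w_norm : ip w w = 2 * (1 + `|x|).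
  rewrite !(ipDl, ipDr, ipZl, ipZr) [ip v _]ipC !ip_e0 v_unit mxE eqxx -/x.
  by rewrite mulr1 -rmorphM /= mux conj_normC [mu^* * mu]mulrC mu_unit; ring.
have w00 : w 0 0 = 1 + `|x| by rewrite !mxE eqxx mux.
have x1_gt0 : 0 < 1 + `|x| by rewrite (lt_le_trans ltr01) // lerDl.
have w_neq0 : w != 0 by rewrite -ip_eq0 w_norm mulf_neq0 ?gt_eqF.
exists (1%:M - (2 / ip w w) *: (w^t* *m w)); first exact: householder_unitary.
exists (- mu); first by rewrite rmorphN mulrNN.
have row0_wtC : row 0 (w^t*) = ((w 0 0)^*)%:M.
  by apply/rowP => j; rewrite (ord1 j) !mxE eqxx mulr1n.
rewrite linearB /= row1 linearZ /= row_mul row0_wtC mul_scalar_mx scalerA.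
have -> : 2 / ip w w * (w 0 0)^* = 1.
  by rewrite w_norm w00 rmorphD rmorph1 /= conj_normC; field; rewrite gt_eqF.
by rewrite scale1r /w opprD addNKr scaleNr.
Qed.

Lemma ip_row_conj_unitary n (V : 'M[C]_n) i j : V \is unitarymx ->
  ip (row i (map_mx conjC V)) (row j (map_mx conjC V)) = (i == j)%:R.
Proof.
by rewrite -conjC_unitary => /unitarymxP VcU; rewrite ip_row VcU mxE eq_sym.
Qed.

Lemma tensZr n m (u : 'rV[C]_n) a (v : 'rV[C]_m) :
  tens u (a *: v) = a *: tens u v.
Proof. by apply/matrixP => i j; rewrite !mxE mulrCA. Qed.

Lemma unitary_tens_decomposition n m (V : 'M[C]_n) (X : 'M[C]_(n, m)) :
  V \is unitarymx -> X = \sum_i tens (row i (map_mx conjC V)) (row i (V *m X)).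
Proof.
move=> V_unit; apply/matrixP => k j; rewrite summxE.
have {1}<- : V^t* *m (V *m X) = X.
  by rewrite mulmxA -[V^t*]mul1mx mulmxKtV // mul1mx.
by rewrite mxE; apply: eq_bigr => i _; rewrite !mxE.
Qed.

End Unitary.

(** * Numerical range *)

Section NumericalRange.
Variable C : numClosedFieldType.

Lemma real_quadratic_root (A B R : C) :
  0 < A -> 0 <= B -> R \is Num.real ->
  exists2 T, T \is Num.real & A * T ^+ 2 - R * T - B = 0.
Proof.
move=> A_gt0 B_ge0 R_real; set D := R ^+ 2 + 4 * A * B.
have D_ge0 : 0 <= D by rewrite addr_ge0 ?real_exprn_even_ge0 // !mulr_ge0 // ltW.
exists ((R + sqrtC D) / (2 * A)).
  by rewrite rpredM ?rpredD ?sqrtC_real // rpredV gtr0_real // mulr_gt0.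
have A_neq0 : A != 0 by rewrite gt_eqF.
have -> : A * ((R + sqrtC D) / (2 * A)) ^+ 2 - R * ((R + sqrtC D) / (2 * A)) - B
          = (sqrtC D ^+ 2 - D) / (4 * A) by rewrite /D; field.
by rewrite sqrtCK subrr mul0r.
Qed.

Lemma exists_phase_real (b c k : C) :
  exists2 w, w != 0 & (w^* * b + w * c) * k \is Num.real.
Proof.
set g := b * k - (c * k)^*.
have E w : (w^* * b + w * c) * k - ((w^* * b + w * c) * k)^* = w^* * g - w * g^*.
  by rewrite /g !(rmorphM, rmorphD, rmorphB, rmorphN) /= !conjCK; ring.
have [g0|g_neq0] := eqVneq g 0; [exists 1 | exists g]; rewrite ?oner_eq0 //.
  by rewrite CrealE eq_sym -subr_eq0 E g0 rmorph0 !mulr0 subrr.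
by rewrite CrealE eq_sym -subr_eq0 E mulrC subrr.
Qed.

Lemma numerical_range2_convex (a b c d l : C) : 0 < l -> l < 1 ->
  exists al be : C, al * al^* + be * be^* = 1 /\
    al * al^* * a + al * be^* * b + be * al^* * c + be * be^* * d
    = l * a + (1 - l) * d.
Proof.
move=> l_gt0 l_lt1; have [->|a_neq_d] := eqVneq a d.
  by exists 1, 0; rewrite rmorph1 rmorph0; split; ring.
set k := (a - d)^*; set q := (a - d) * k.
have k_neq0 : k != 0 by rewrite conjC_eq0 subr_eq0.
have q_gt0 : 0 < q by rewrite lt_def mul_conjC_eq0 subr_eq0 a_neq_d mul_conjC_ge0.
have [w w_neq0] := exists_phase_real b c k.
set z := w^* * b + w * c => zk_real; set rho := w * w^*.
have rho_gt0 : 0 < rho by rewrite lt_def mul_conjC_eq0 w_neq0 mul_conjC_ge0.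
have lq_ge0 : 0 <= (1 - l) * q by rewrite mulr_ge0 ?subr_ge0 ?ltW.
have [T T_real quadT] :=
  real_quadratic_root (mulr_gt0 (mulr_gt0 l_gt0 rho_gt0) q_gt0) lq_ge0 zk_real.
set N := 1 + rho * T ^+ 2.
have N_gt0 : 0 < N.
  by rewrite (lt_le_trans ltr01) // lerDl mulr_ge0 ?real_exprn_even_ge0 // ltW.
(* For [(al, be) := (1, w T) / sqrt N] the claim reduces to [balance], and [k]
   times [balance] is the quadratic equation solved by [T]. *)
have balance : a + T * z + rho * T ^+ 2 * d = (l * a + (1 - l) * d) * N.
  apply/eqP; rewrite -subr_eq0 -(mulIr_eq0 _ (mulIf k_neq0)) mulrC.
  have -> : k * (a + T * z + rho * T ^+ 2 * d - (l * a + (1 - l) * d) * N)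
            = - (l * rho * q * T ^+ 2 - z * k * T - (1 - l) * q).
    by rewrite /N /q; ring.
  by rewrite quadT oppr0.
set r := (sqrtC N)^-1.
have r_conj : r^* = r by rewrite geC0_conj // invr_ge0 sqrtC_ge0 ltW.
have rr : r * r * N = 1 by rewrite /r -expr2 exprVn sqrtCK mulVf // gt_eqF.
exists r, (w * T * r); rewrite !rmorphM /= r_conj (conj_Creal T_real); split.
  by rewrite -rr /N /rho; ring.
transitivity (r * r * (a + T * z + rho * T ^+ 2 * d)); first by rewrite /z /rho; ring.
by rewrite balance mulrA mulrAC rr mul1r.
Qed.

Lemma numerical_range_mean n (G : 'M[C]_n.+1) :
  exists2 v : 'rV[C]_n.+1, v \is unitarymx &
    (v *m G *m v^t*) 0 0 = \tr G / n.+1%:R.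
Proof.
elim: n G => [|n IH] G.
  exists 1; first exact: unitarymx1.
  by rewrite mul1mx trmx1 map_mx1 mulmx1 trace_mx11 divr1.
have [Gul [Gur [Gdl [G' ->]]]] :
    exists Gul Gur Gdl G', G = @block_mx C 1 n.+1 1 n.+1 Gul Gur Gdl G'.
  by do 4 eexists; exact: esym (@submxK _ 1 n.+1 1 n.+1 G).
rewrite (mxtrace_block (n1 := 1)) trace_mx11.
suff [v v_unit vGv] : exists2 v : 'rV[C]_(1 + n.+1), v \is unitarymx &
    (v *m block_mx Gul Gur Gdl G' *m v^t*) 0 0 = (Gul 0 0 + \tr G') / n.+2%:R.
  by exists v.
have [v' v'_unit v'G'v'] := IH G'.
set a := \tr G' / n.+1%:R.
pose b := (v' *m Gdl) 0 0; pose c := (Gur *m v'^t*) 0 0.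
(* the weight of the mean of [G'] in the mean of [G] *)
pose l : C := n.+1%:R / n.+2%:R.
have l_gt0 : 0 < l by rewrite divr_gt0 ?ltr0Sn.
have l_lt1 : l < 1 by rewrite ltr_pdivrMr ?ltr0Sn // mul1r ltr_nat.
have [al [be [ab_unit ab_mean]]] := numerical_range2_convex a b c (Gul 0 0) l_gt0 l_lt1.
exists (row_mx be%:M (al *: v')).
  apply/unitarymxP; rewrite tr_row_mx map_col_mx mul_row_col trmxC_scalar trmxCZ.
  rewrite -scalar_mxM -scalemxAr -scalemxAl scalerA (unitarymxP v'_unit).
  by rewrite scalemx1 -raddfD /= [al^* * al]mulrC addrC ab_unit.
rewrite (tr_row_mx (be%:M : 'M_1)) map_col_mx mul_row_block mul_row_col.
rewrite trmxC_scalar trmxCZ !mulmxDl !mul_scalar_mx !mul_mx_scalar.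
rewrite -!scalemxAl -!scalemxAr [v' *m Gdl]mx11_scalar -/b.
rewrite -mulmxA [Gur *m _]mx11_scalar -/c mulmxA [v' *m G' *m _]mx11_scalar.
rewrite v'G'v' -/a {1}[Gul]mx11_scalar !mxE !eqxx !mulr1n.
transitivity (l * a + (1 - l) * Gul 0 0); first by rewrite -ab_mean; ring.
by rewrite /l /a; field; rewrite -(natrD _ 2 n) -(natrD _ 1 n) !pnatr_eq0.
Qed.

Theorem unitary_zero_diagonal n (G : 'M[C]_n) : \tr G = 0 ->
  exists2 V : 'M[C]_n, V \is unitarymx & forall i, (V *m G *m V^t*) i i = 0.
Proof.
elim: n G => [|n IH] G trG; first by exists 1%:M => [|[]]; rewrite ?unitarymx1.
have [v v_unit] := numerical_range_mean G; rewrite trG mul0r => vGv.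
have [V1 V1_unit [mu mu_unit V1_0]] := unitary_completion v_unit.
have G1_00 : (V1 *m G *m V1^t*) 0 0 = 0.
  rewrite -ip_row row_mul V1_0 -scalemxAl ipZl ipZr mulrA.
  by rewrite [mu^* * mu]mulrC mu_unit mul1r -(row_id 0 v) -row_mul ip_row vGv.
have trG1 : \tr (V1 *m G *m V1^t*) = 0.
  by rewrite mxtrace_mulC mulmxA -[V1^t*]mul1mx mulmxKtV // mul1mx.
have [g [r [c [G' G1E]]]] : exists g r c G',
    V1 *m G *m V1^t* = @block_mx C 1 n 1 n g r c G'.
  by do 4 eexists; exact: esym (@submxK _ 1 n 1 n _).
have lshift0 : lshift n (0 : 'I_1) = 0 by exact: val_inj.
have g00 : g 0 0 = 0 by rewrite -G1_00 G1E -(block_mxEul g r c G' 0 0) lshift0.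
have [Q Q_unit QG'Q] : exists2 Q : 'M[C]_n, Q \is unitarymx &
    forall i, (Q *m G' *m Q^t*) i i = 0.
  apply: IH; move: trG1.
  by rewrite G1E (mxtrace_block (n1 := 1)) trace_mx11 g00 add0r.
exists (block_mx (1%:M : 'M_1) 0 0 Q *m V1).
  exact: mul_unitarymx (unitarymx_block_diag (@unitarymx1 C 1) Q_unit) V1_unit.
set B := block_mx _ _ _ _ => i.
have -> : B *m V1 *m G *m (B *m V1)^t* = B *m (V1 *m G *m V1^t*) *m B^t*.
  by rewrite trmxC_mul !mulmxA.
rewrite G1E conj_block_diag; case: (split_ordP (i : 'I_(1 + n))) => [j ->|k ->].
  by rewrite (@block_mxEul _ 1 n 1 n) ord1 mul1mx trmx1 map_mx1 mulmx1.
by rewrite (@block_mxEdr _ 1 n 1 n) QG'Q.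
Qed.

End NumericalRange.

Section ComponentBounds.
Variable C : numClosedFieldType.

Lemma proj_coef_bounds p q (s t k : C) (phi psi D : 'M[C]_(p, q)) :
  ip phi phi = 1 -> ip psi psi = 1 -> 0 < ip phi psi -> 0 < s -> 0 < t ->
  s <= t -> ip phi psi <= sqrtC (s / t) ->
  D = sqrtC t *: psi - sqrtC s *: phi -> k = ip D (sqrtC s *: phi) / ip D D ->
  [/\ k \is Num.real, k <= 0 & 0 <= 1 + 2 * k].
Proof.
move=> phi_unit psi_unit c_gt0 s_gt0 t_gt0 s_le_t c_le D_def ->.
set c := ip phi psi in c_gt0 c_le *.
set sg := sqrtC s in D_def *; set tau := sqrtC t in D_def *.
have sg_gt0 : 0 < sg by rewrite sqrtC_gt0.
have tau_gt0 : 0 < tau by rewrite sqrtC_gt0.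
have sg_conj : sg^* = sg by rewrite geC0_conj // ltW.
have tau_conj : tau^* = tau by rewrite geC0_conj // ltW.
have psi_phi : ip psi phi = c by rewrite ipC geC0_conj // ltW.
have sg2 : sg * sg = s by rewrite -expr2 sqrtCK.
have tau2 : tau * tau = t by rewrite -expr2 sqrtCK.
have DU : ip D (sg *: phi) = sg * tau * c - s.
  rewrite D_def !(ipDl, ipNl, ipZl, ipZr) psi_phi phi_unit sg_conj tau_conj.
  by rewrite -sg2; ring.
have DD : ip D D = t + s - 2 * sg * tau * c.
  rewrite D_def !(ipDl, ipDr, ipNl, ipNr, ipZl, ipZr) psi_phi -/c.
  by rewrite phi_unit psi_unit sg_conj tau_conj -sg2 -tau2; ring.
have DU_le0 : ip D (sg *: phi) <= 0.
  have sg_tau : sg * tau * sqrtC (s / t) = s.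
    rewrite /sg /tau -mulrA [sqrtC t * _]mulrC -sqrtCM ?nnegrE ?divr_ge0 ?ltW //.
    by rewrite divfK ?gt_eqF // -expr2 sqrtCK.
  by rewrite DU subr_le0 -sg_tau ler_wpM2l // mulr_ge0 // ltW.
split.
- by rewrite rpredM ?rpredV ?ip_real ?ler0_real.
- by rewrite mulr_le0_ge0 // invr_ge0 ip_ge0.
(* If [D = 0] then [k = 0], as [x / 0 = 0]. *)
have [DD0|DD_neq0] := eqVneq (ip D D) 0.
  by rewrite DD0 invr0 !mulr0 addr0 ler01.
have -> : 1 + 2 * (ip D (sg *: phi) / ip D D)
          = (ip D D + 2 * ip D (sg *: phi)) / ip D D by field.
rewrite divr_ge0 ?ip_ge0 // {1}DD DU.
have -> : t + s - 2 * sg * tau * c + 2 * (sg * tau * c - s) = t - s by ring.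
by rewrite subr_ge0.
Qed.

Lemma ip_bounds_of_orth p q (sg tau k : C) (x y d : 'M[C]_(p, q)) :
  0 < sg -> 0 < tau -> k \is Num.real -> k <= 0 -> 0 <= 1 + 2 * k ->
  d = tau *: y - sg *: x -> ip d (sg *: x - k *: d) = 0 ->
  [/\ ip x y \is Num.real, sg ^+ 2 * ip x x <= tau ^+ 2 * ip y y
    & tau * ip x y <= sg * ip x x].
Proof.
move=> sg_gt0 tau_gt0 k_real k_le0 k_ge d_def.
have sg_conj : sg^* = sg by rewrite geC0_conj // ltW.
have tau_conj : tau^* = tau by rewrite geC0_conj // ltW.
have dd : ip d d = tau ^+ 2 * ip y y - sg * tau * (ip x y + (ip x y)^*)
                   + sg ^+ 2 * ip x x.
  rewrite d_def !(ipDl, ipDr, ipNl, ipNr, ipZl, ipZr) [ip y x]ipC.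
  by rewrite sg_conj tau_conj; ring.
have dx : ip d (sg *: x) = sg * tau * (ip x y)^* - sg ^+ 2 * ip x x.
  by rewrite d_def !(ipDl, ipNl, ipZl, ipZr) [ip y x]ipC sg_conj tau_conj; ring.
rewrite ipDr ipNr dx ipZr => /eqP; rewrite subr_eq0 => /eqP orth.
have sgtau_neq0 : sg * tau != 0 by rewrite mulf_neq0 ?gt_eqF.
have rC_real : (ip x y)^* \is Num.real.
  have -> : (ip x y)^* = (k * ip d d + sg ^+ 2 * ip x x) / (sg * tau).
    by rewrite -orth subrK mulrC mulKf.
  by rewrite !(rpredM, rpredV, rpredD, rpredX, ip_real, gtr0_real sg_gt0,
               gtr0_real tau_gt0).
have r_conj : (ip x y)^* = ip x y by rewrite -[RHS]conjCK (conj_Creal rC_real).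
have r_real : ip x y \is Num.real by rewrite -r_conj.
rewrite r_conj in dd orth; split => //.
  have -> : tau ^+ 2 * ip y y = sg ^+ 2 * ip x x + ip d d * (1 + 2 * k).
    by rewrite mulrDr mulr1 mulrCA [ip d d * k]mulrC -orth dd; ring.
  by rewrite lerDl mulr_ge0 ?ip_ge0.
rewrite -subr_le0 -(pmulr_rle0 _ sg_gt0).
have -> : sg * (tau * ip x y - sg * ip x x) = k * ip d d by rewrite -orth; ring.
by rewrite mulr_le0_ge0 ?ip_ge0.
Qed.

Lemma normalize_bounds p q (s t : C) (x y g : 'M[C]_(p, q)) :
  0 < s -> 0 < t -> ip g g = 1 -> y = sqrtC (ip y y) *: g ->
  ip x y \is Num.real -> s * ip x x <= t * ip y y ->
  sqrtC t * ip x y <= sqrtC s * ip x x ->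
  ip (normalize (- g) x) g \is Num.real /\
  sqrtC (t * ip y y) * ip (normalize (- g) x) g <= sqrtC (s * ip x x).
Proof.
move=> s_gt0 t_gt0 g_unit y_def r_real le_st le_r; rewrite /normalize.
case: eqP => [->|/eqP x_neq0].
  rewrite ipNl g_unit mulr0 sqrtC0 mulrN1 oppr_le0 sqrtC_ge0.
  by rewrite rpredN rpred1 mulr_ge0 ?ip_ge0 ?ltW.
have A_gt0 : 0 < ip x x by rewrite lt_def x_neq0 ip_ge0.
have B_gt0 : 0 < ip y y.
  rewrite lt_def ip_ge0 andbT; apply: contraTneq le_st => ->.
  by rewrite mulr0 lt_geF // mulr_gt0.
set a := sqrtC (ip x x); set b := sqrtC (ip y y).
have a_gt0 : 0 < a by rewrite sqrtC_gt0.
have b_gt0 : 0 < b by rewrite sqrtC_gt0.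
have g_def : g = b^-1 *: y by rewrite [in RHS]y_def scalerA mulVf ?scale1r ?gt_eqF.
have a_inv_conj : (a^-1)^* = a^-1 by rewrite geC0_conj // invr_ge0 ltW.
rewrite g_def ipZl ipZr a_inv_conj; split.
  by rewrite !rpredM // rpredV gtr0_real.
rewrite !sqrtCM ?nnegrE ?ip_ge0 ?(ltW s_gt0) ?(ltW t_gt0) // -/a -/b.
have -> : sqrtC t * b * (a^-1 * (b^-1 * ip x y)) = sqrtC t * ip x y / a.
  by field; rewrite !gt_eqF.
by rewrite ler_pdivrMr // -mulrA -expr2 sqrtCK.
Qed.

Lemma basis_component_bounds n m (s t : C) (phi psi : 'M[C]_(n, m)) :
  ip phi phi = 1 -> ip psi psi = 1 -> 0 < ip phi psi -> 0 < s -> 0 < t ->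
  s <= t -> ip phi psi <= sqrtC (s / t) ->
  exists2 V : 'M[C]_n, V \is unitarymx &
    forall i, let a := row i (V *m phi) in let b := row i (V *m psi) in
    [/\ ip a b \is Num.real, s * ip a a <= t * ip b b
      & sqrtC t * ip a b <= sqrtC s * ip a a].
Proof.
move=> phi_unit psi_unit c_gt0 s_gt0 t_gt0 s_le_t c_le.
have sg_gt0 : 0 < sqrtC s by rewrite sqrtC_gt0.
have tau_gt0 : 0 < sqrtC t by rewrite sqrtC_gt0.
pose D := sqrtC t *: psi - sqrtC s *: phi.
pose k := ip D (sqrtC s *: phi) / ip D D.
have [k_real k_le0 k_ge] := proj_coef_bounds phi_unit psi_unit c_gt0 s_gt0 t_gt0
  s_le_t c_le (erefl D) (erefl k).
pose Y := sqrtC s *: phi - k *: D.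
have [V V_unit V_diag] : exists2 V : 'M[C]_n, V \is unitarymx &
    forall i, (V *m (Y *m D^t*) *m V^t*) i i = 0.
  by apply: unitary_zero_diagonal; rewrite mxtrace_mul_tC ip_sub_proj.
exists V => // i a b.
have d_def : row i (V *m D) = sqrtC t *: b - sqrtC s *: a.
  by rewrite /D mulmxBr -!scalemxAr linearB !linearZ.
have y_def : sqrtC s *: a - k *: row i (V *m D) = row i (V *m Y).
  by rewrite /Y [in RHS]mulmxBr -!scalemxAr [in RHS]linearB !linearZ.
have orth : ip (row i (V *m D)) (sqrtC s *: a - k *: row i (V *m D)) = 0.
  by rewrite y_def ip_row trmxC_mul !mulmxA -(V_diag i) !mulmxA.
have [] := ip_bounds_of_orth sg_gt0 tau_gt0 k_real k_le0 k_ge d_def orth.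
by rewrite !sqrtCK.
Qed.

End ComponentBounds.

Theorem lemma3 (C : numClosedFieldType) (n m : nat) (phi psi : 'M[C]_(n, m))
  (s t : C) :
  ip phi phi = 1 -> ip psi psi = 1 -> 0 < ip phi psi ->
  0 < s -> 0 < t -> s + t = 1 -> s <= t -> ip phi psi <= sqrtC (s / t) ->
  exists (e : 'I_n -> 'rV[C]_n) (si ti : 'I_n -> C)
         (eta gam : 'I_n -> 'rV[C]_m),
    (forall i j, ip (e i) (e j) = (i == j)%:R) /\
    (forall i, 0 <= si i /\ 0 <= ti i) /\
    (forall i, ip (eta i) (eta i) = 1 /\ ip (gam i) (gam i) = 1) /\
    phi = \sum_(i < n) sqrtC (si i) *: tens (e i) (eta i) /\
    psi = \sum_(i < n) sqrtC (ti i) *: tens (e i) (gam i) /\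
    (forall i, [/\ ip (eta i) (gam i) \is Num.real,
                       s * si i <= t * ti i &
                       sqrtC (t * ti i) * ip (eta i) (gam i) <= sqrtC (s * si i)]).
Proof.
move=> phi_unit psi_unit c_gt0 s_gt0 t_gt0 _ s_le_t c_le.
have [V V_unit bounds] :=
  basis_component_bounds phi_unit psi_unit c_gt0 s_gt0 t_gt0 s_le_t c_le.
pose a i := row i (V *m phi); pose b i := row i (V *m psi).
have [u u_unit] := exists_unit_rV phi_unit.
(* When [a i = 0], the fallback [- gam i] makes [ip (eta i) (gam i) = -1]. *)
pose gam i := normalize u (b i); pose eta i := normalize (- gam i) (a i).
exists (fun i => row i (map_mx conjC V)), (fun i => ip (a i) (a i)),
  (fun i => ip (b i) (b i)), eta, gam.
split; [|split; [|split; [|split; [|split]]]].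
- by move=> i j; exact: ip_row_conj_unitary.
- by move=> i; rewrite !ip_ge0.
- by move=> i; rewrite !ip_normalize // ipNl ipNr opprK ip_normalize.
- rewrite {1}(unitary_tens_decomposition phi V_unit); apply: eq_bigr => i _.
  by rewrite -tensZr normalizeK.
- rewrite {1}(unitary_tens_decomposition psi V_unit); apply: eq_bigr => i _.
  by rewrite -tensZr normalizeK.
move=> i; have [ab_real le_st le_ab] := bounds i.
have [] := normalize_bounds s_gt0 t_gt0 (ip_normalize (b i) u_unit)
  (esym (normalizeK u (b i))) ab_real le_st le_ab.
by split.
Qed.
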